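(* Assume $J$ satisfies (J1), (J2), (J3), (J4) and $h$ satisfies (h1), (h2). Let $u$ be a minimizer for $H$ in $Q_\ell(q)$, for some $q\in\mathbb Z^d$ and $\ell\in\mathbb N$. Then $$H_{Q_\ell(q)}(u)\le\bar C\,\ell^{d-1}\Big(1+\sum_{m=1}^{\ell}\sigma(m)\Big),$$ for a constant $\bar C\ge1$ depending only on $d$, $\mu$ and $\tau$. Moreover, if $h$ vanishes in $Q_\ell(q)$, $\bar C$ may be chosen depending only on $d$.
   Context: Fix $d\ge2$, $|x|:=\sum_n|x_n|$, $|x|_\infty:=\max_n|x_n|$. Configurations are maps $u:\mathbb Z^d\to\{-1,1\}$. Given $J:\mathbb Z^d\times\mathbb Z^d\to[0,\infty)$ and $h:\mathbb Z^d\to\mathbb R$, for finite $\Gamma$: $H_\Gamma(u):=\sum_{(i,j)\in\mathbb Z^{2d}\setminus(\mathbb Z^d\setminus\Gamma)^2}J_{ij}(1-u_iu_j)+\sum_{i\in\Gamma}h_iu_i$; $u$ is a minimizer for $H$ in $\Gamma$ if $H_\Gamma(u)\le H_\Gamma(v)$ for all configurations $v$ agreeing with $u$ outside $\Gamma$. $Q_\ell(q):=\{i\in\mathbb Z^d:|i-q|_\infty\le\ell\}$. Conditions (constants $\Lambda\ge\lambda>0$, $\mu>0$, $\tau\in\mathbb N$): (J1) $J_{ij}=J_{ji}$; (J2) $J_{ii}=0$; (J3) $J_{ij}\ge\lambda$ if $|i-j|=1$; (J4) $\sum_jJ_{ij}\le\Lambda$ for all $i$; (h1) $\sup_i|h_i|\le\mu$;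 (h2) $\sum_{i\in F}h_i=0$ for every fundamental domain $F$ (set of representatives) of $\mathbb Z^d/\tau\mathbb Z^d$. For $R\in\mathbb N$, $\sigma(R):=\sup_{i\in\mathbb Z^d}\sum_{j:\,|j-i|_\infty\ge R}J_{ij}$. *)

From Stdlib Require Import Reals ZArith List.
Import ListNotations.
Open Scope R_scope.

(* Points of Z^d are lists of integers of length d. *)
Definition site (d : nat) (x : list Z) : Prop := length x = d.

Definition vsub (x y : list Z) : list Z :=
  map (fun p => (fst p - snd p)%Z) (combine x y).

Definition norm1 (x : list Z) : Z :=
  fold_right (fun a s => (Z.abs a + s)%Z) 0%Z x.

Definition normInf (x : list Z) : Z :=
  fold_right (fun a s => Z.max (Z.abs a) s) 0%Z x.

Definition cube (d : nat) (l : nat) (q : list Z) (i : list Z) : Prop :=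
  site d i /\ (normInf (vsub i q) <= Z.of_nat l)%Z.

Definition lsum (l : list R) : R := fold_right Rplus 0 l.

(* Unordered sum of a nonnegative family indexed by {x | P x}:
   L is the least upper bound of all finite partial sums
   (over duplicate-free finite lists of indices satisfying P). *)
Definition has_nnsum {T : Type} (P : T -> Prop) (f : T -> R) (L : R) : Prop :=
  is_lub (fun s => exists l : list T,
            NoDup l /\ Forall P l /\ s = lsum (map f l)) L.

(* Sum over a finite set {x | P x}: L is the sum over some duplicate-free
   enumeration of that set (independent of the enumeration). *)
Definition finsum {T : Type} (P : T -> Prop) (f : T -> R) (L : R) : Prop :=
  exists l : list T, NoDup l /\ (forall x, In x l <-> P x) /\ L = lsum (map f l).

Definition config (d : nat) (u : list Z -> R) : Prop :=
  forall i, site d i -> u i = 1 \/ u i = -1.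

(* H_Gamma(u) = L, where the pair sum runs over
   Z^{2d} \ (Z^d \ Gamma)^2 = pairs (i,j) with i in Gamma or j in Gamma. *)
Definition Hval (d : nat) (J : list Z -> list Z -> R) (h : list Z -> R)
    (Gamma : list Z -> Prop) (u : list Z -> R) (L : R) : Prop :=
  exists A B,
    has_nnsum (fun p : list Z * list Z =>
                 site d (fst p) /\ site d (snd p) /\ (Gamma (fst p) \/ Gamma (snd p)))
              (fun p => J (fst p) (snd p) * (1 - u (fst p) * u (snd p))) A /\
    finsum (fun i => site d i /\ Gamma i) (fun i => h i * u i) B /\
    L = A + B.

(* u is a minimizer for H in Gamma: H_Gamma(u) is finite and
   H_Gamma(u) <= H_Gamma(v) for every configuration v agreeing with u outside
   Gamma (when H_Gamma(v) = +infinity there is nothing to check). *)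
Definition minimizer (d : nat) (J : list Z -> list Z -> R) (h : list Z -> R)
    (Gamma : list Z -> Prop) (u : list Z -> R) : Prop :=
  config d u /\
  exists Lu, Hval d J h Gamma u Lu /\
  forall v, config d v ->
    (forall i, site d i -> ~ Gamma i -> v i = u i) ->
    forall Lv, Hval d J h Gamma v Lv -> Lu <= Lv.

Definition J_nonneg d (J : list Z -> list Z -> R) : Prop :=
  forall i j, site d i -> site d j -> 0 <= J i j.
Definition J1 d (J : list Z -> list Z -> R) : Prop :=
  forall i j, site d i -> site d j -> J i j = J j i.
Definition J2 d (J : list Z -> list Z -> R) : Prop :=
  forall i, site d i -> J i i = 0.
Definition J3 d (lambda : R) (J : list Z -> list Z -> R) : Prop :=
  forall i j, site d i -> site d j -> norm1 (vsub i j) = 1%Z -> lambda <= J i j.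
(* sum_j J_ij <= Lambda, i.e. every finite partial sum is <= Lambda *)
Definition J4 d (Lambda : R) (J : list Z -> list Z -> R) : Prop :=
  forall i, site d i -> forall l, NoDup l -> Forall (site d) l ->
    lsum (map (J i) l) <= Lambda.

Definition h1 d (mu : R) (h : list Z -> R) : Prop :=
  forall i, site d i -> Rabs (h i) <= mu.

Definition congr_mod (tau : nat) (i j : list Z) : Prop :=
  Forall2 (fun a b => Z.modulo a (Z.of_nat tau) = Z.modulo b (Z.of_nat tau)) i j.

Definition fund_domain (d tau : nat) (F : list Z -> Prop) : Prop :=
  (forall j, F j -> site d j) /\
  (forall i, site d i -> exists j, F j /\ congr_mod tau i j /\
     forall j', F j' -> congr_mod tau i j' -> j' = j).

Definition h2 d (tau : nat) (h : list Z -> R) : Prop :=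
  forall F, fund_domain d tau F -> finsum F h 0.

(* sigma(R) = sup_i sum_{j : |j - i|_inf >= R} J_ij  (value s) *)
Definition sigma_val d (J : list Z -> list Z -> R) (Rr : nat) (s : R) : Prop :=
  is_lub (fun x => exists i, site d i /\
            has_nnsum (fun j => site d j /\ (Z.of_nat Rr <= normInf (vsub j i))%Z)
                      (J i) x) s.

Definition rhs (C : R) (d l : nat) (sig : nat -> R) : R :=
  C * INR l ^ (d - 1) * (1 + lsum (map sig (seq 1 l))).

From Stdlib Require Import Reals ZArith List Lia Lra Permutation Bool.
Import ListNotations.
Open Scope R_scope.

(* Compare [u] with the configuration equal to [u] outside [Q_l(q)] and to a constant sign [s]
   inside, with [s] chosen so that the field energy [s * sum_Q h] is nonpositive.  Only bonds
   between the cube and its complement then contribute, each at most [2 J_ij].  A site at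
   sup-distance [k] from [q] is at sup-distance at least [l + 1 - k] from the complement, so its
   outgoing bonds weigh at most [sigma(l + 1 - k)].  Bounding [sigma(l + 1 - |i - q|_inf)] by the
   sum over coordinates [n] of [sigma(l + 1 - |i_n - q_n|)] and summing over the cube, each
   [sigma(m)] is counted [O(d (2l+1)^(d-1))] times, which gives the bound with
   [C = 12 d 3^(d-1)]. *)

Lemma lsum_cons (x : R) (a : list R) : lsum (x :: a) = x + lsum a.
Proof. reflexivity. Qed.

Lemma lsum_app (a b : list R) : lsum (a ++ b) = lsum a + lsum b.
Proof. induction a as [|x a IH]; simpl; [lra | rewrite IH; lra]. Qed.

Lemma lsum_perm (a b : list R) : Permutation a b -> lsum a = lsum b.
Proof. induction 1; simpl; lra. Qed.

Lemma lsum_map_ext {A} (f g : A -> R) (L : list A) :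
  (forall x, In x L -> f x = g x) -> lsum (map f L) = lsum (map g L).
Proof. intros E. f_equal. now apply map_ext_in. Qed.

Lemma lsum_map_plus {A} (f g : A -> R) (L : list A) :
  lsum (map (fun x => f x + g x) L) = lsum (map f L) + lsum (map g L).
Proof. induction L; simpl; lra. Qed.

Lemma lsum_map_scal {A} (f : A -> R) (c : R) (L : list A) :
  lsum (map (fun x => c * f x) L) = c * lsum (map f L).
Proof. induction L as [|x L IH]; simpl; [lra | rewrite IH; lra]. Qed.

Lemma lsum_map_const {A} (c : R) (L : list A) :
  lsum (map (fun _ => c) L) = c * INR (length L).
Proof.
  induction L as [|x L IH]; simpl length; [simpl; lra|].
  rewrite S_INR; simpl; rewrite IH; lra.
Qed.

Lemma lsum_map_le {A} (f g : A -> R) (L : list A) :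
  (forall x, In x L -> f x <= g x) -> lsum (map f L) <= lsum (map g L).
Proof.
  induction L as [|x L IH]; simpl; intros H; [lra|].
  pose proof (H x (or_introl eq_refl)). pose proof (IH (fun y Hy => H y (or_intror Hy))). lra.
Qed.

Lemma lsum_map_nonneg {A} (f : A -> R) (L : list A) :
  (forall x, In x L -> 0 <= f x) -> 0 <= lsum (map f L).
Proof.
  intros H. rewrite <- (Rmult_0_l (INR (length L))), <- lsum_map_const.
  now apply lsum_map_le.
Qed.

Lemma lsum_map_ge_In {A} (f : A -> R) (L : list A) (y : A) :
  (forall x, In x L -> 0 <= f x) -> In y L -> f y <= lsum (map f L).
Proof.
  induction L as [|x L IH]; simpl; intros Hn Hy; [tauto|].
  assert (Htail := lsum_map_nonneg f L (fun z Hz => Hn z (or_intror Hz))).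
  destruct Hy as [<- | Hy]; [lra|].
  pose proof (IH (fun z Hz => Hn z (or_intror Hz)) Hy). pose proof (Hn x (or_introl eq_refl)). lra.
Qed.

Lemma lsum_map_flat_map {A B} (f : B -> R) (g : A -> list B) (L : list A) :
  lsum (map f (flat_map g L)) = lsum (map (fun a => lsum (map f (g a))) L).
Proof. induction L as [|a L IH]; simpl; auto. now rewrite map_app, lsum_app, IH. Qed.

Lemma lsum_map_filter {A} (f : A -> R) (b : A -> bool) (L : list A) :
  lsum (map f (filter b L)) = lsum (map (fun x => if b x then f x else 0) L).
Proof. induction L as [|x L IH]; simpl; auto. destruct (b x); simpl; rewrite IH; lra. Qed.

Lemma lsum_seq_shift (f : nat -> R) (s n : nat) :
  lsum (map f (seq s n)) = lsum (map (fun k => f (s + k)%nat) (seq 0 n)).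
Proof.
  revert f s. induction n as [|n IH]; intros f s; cbn [seq map]; auto.
  rewrite !lsum_cons, IH, (IH _ 1%nat), Nat.add_0_r. f_equal.
  apply lsum_map_ext. intros k _. f_equal. lia.
Qed.

Lemma lsum_seq_rev (f : nat -> R) (n : nat) :
  lsum (map (fun k => f (n - k)%nat) (seq 0 n)) = lsum (map f (seq 1 n)).
Proof.
  induction n as [|n IH]; [reflexivity|].
  change (seq 0 (S n)) with (0%nat :: seq 1 n). rewrite <- seq_shift at 1.
  cbn [map]. rewrite lsum_cons, map_map.
  rewrite (lsum_map_ext _ (fun k => f (n - k)%nat)) by (intros; f_equal; lia).
  rewrite IH, seq_S, map_app, lsum_app. simpl. replace (1 + n)%nat with (S n) by lia. lra.
Qed.

Lemma vsub_cons (a b : Z) (x y : list Z) : vsub (a :: x) (b :: y) = (a - b)%Z :: vsub x y.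
Proof. reflexivity. Qed.

Lemma vsub_length (a b : list Z) : length (vsub a b) = Nat.min (length a) (length b).
Proof. unfold vsub. now rewrite length_map, length_combine. Qed.

Lemma normInf_cons (a : Z) (x : list Z) : normInf (a :: x) = Z.max (Z.abs a) (normInf x).
Proof. reflexivity. Qed.

Lemma normInf_nonneg (v : list Z) : (0 <= normInf v)%Z.
Proof. induction v; simpl; lia. Qed.

Lemma normInf_attained (v : list Z) : v <> [] -> exists z, In z v /\ Z.abs z = normInf v.
Proof.
  induction v as [|a v IH]; intros H; [congruence|].
  destruct v as [|b v].
  - exists a. simpl. split; auto. lia.
  - destruct IH as [z [Hz Ez]]; [congruence|].
    rewrite normInf_cons.
    destruct (Z.le_ge_cases (Z.abs a) (normInf (b :: v))).
    + exists z. split; [right; auto | lia].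
    + exists a. split; [left; auto | lia].
Qed.

Lemma normInf_vsub_triangle (a b c : list Z) :
  length a = length b -> length b = length c ->
  (normInf (vsub a c) <= normInf (vsub a b) + normInf (vsub b c))%Z.
Proof.
  revert b c. induction a as [|x a IH]; intros [|y b] [|z c] H1 H2;
    simpl in H1, H2; try (simpl; lia).
  rewrite !vsub_cons, !normInf_cons. specialize (IH b c ltac:(lia) ltac:(lia)). lia.
Qed.

Definition interval_list (l : nat) (a : Z) : list Z :=
  map (fun k => (a + Z.of_nat k - Z.of_nat l)%Z) (seq 0 (2 * l + 1)).

Fixpoint cube_list (l : nat) (q : list Z) : list (list Z) :=
  match q with
  | [] => [[]]
  | a :: q' => flat_map (fun b => map (cons b) (cube_list l q')) (interval_list l a)
  end.

Lemma in_interval_list (l : nat) (a b : Z) :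
  In b (interval_list l a) <-> (Z.abs (b - a) <= Z.of_nat l)%Z.
Proof.
  unfold interval_list. rewrite in_map_iff. split.
  - intros [k [<- Hk]]. apply in_seq in Hk. lia.
  - intros H. exists (Z.to_nat (b - a + Z.of_nat l)). split; [lia|]. apply in_seq. lia.
Qed.

Lemma NoDup_interval_list (l : nat) (a : Z) : NoDup (interval_list l a).
Proof.
  apply FinFun.Injective_map_NoDup; [|apply seq_NoDup].
  intros x y H. lia.
Qed.

Lemma length_interval_list (l : nat) (a : Z) : length (interval_list l a) = (2 * l + 1)%nat.
Proof. unfold interval_list. now rewrite length_map, length_seq. Qed.

Lemma in_cube_list (l : nat) (q x : list Z) :
  In x (cube_list l q) <-> length x = length q /\ (normInf (vsub x q) <= Z.of_nat l)%Z.
Proof.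
  revert x. induction q as [|a q IH]; intros x.
  - simpl. split.
    + intros [<- | []]. simpl. lia.
    + intros [H _]. destruct x; simpl in H; [auto | lia].
  - simpl cube_list. rewrite in_flat_map. split.
    + intros [b [Hb Hx]]. apply in_map_iff in Hx. destruct Hx as [x' [<- Hx']].
      apply IH in Hx'. apply in_interval_list in Hb.
      rewrite vsub_cons, normInf_cons. simpl length. lia.
    + destruct x as [|b x']; simpl length; intros [H1 H2]; [lia|].
      rewrite vsub_cons, normInf_cons in H2.
      exists b. split; [apply in_interval_list; lia|]. apply in_map, IH. lia.
Qed.

Lemma in_cube_list_cube (d l : nat) (q i : list Z) :
  site d q -> In i (cube_list l q) <-> cube d l q i.
Proof. intros Hq. rewrite in_cube_list. unfold cube, site in *. rewrite Hq. tauto. Qed.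

Lemma NoDup_cube_list (l : nat) (q : list Z) : NoDup (cube_list l q).
Proof.
  induction q as [|a q IH]; [repeat constructor; auto|].
  simpl. generalize (NoDup_interval_list l a). induction (interval_list l a) as [|b r IHr]; intros Hr.
  - constructor.
  - inversion Hr; subst. simpl. apply NoDup_app.
    + apply FinFun.Injective_map_NoDup; auto. intros x y H; congruence.
    + now apply IHr.
    + intros x Hx Hx'. apply in_map_iff in Hx. destruct Hx as [x0 [<- _]].
      apply in_flat_map in Hx'. destruct Hx' as [b' [Hb' Hx']].
      apply in_map_iff in Hx'. destruct Hx' as [x1 [E _]]. inversion E; subst. auto.
Qed.

Lemma length_cube_list (l : nat) (q : list Z) :
  length (cube_list l q) = ((2 * l + 1) ^ length q)%nat.
Proof.
  induction q as [|a q IH]; [reflexivity|]. simpl cube_list.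
  rewrite (flat_map_constant_length _ _ (c := length (cube_list l q)))
    by (intros; apply length_map).
  rewrite length_interval_list, IH. simpl length. now rewrite Nat.pow_succ_r'.
Qed.

Definition coord_sum (G : Z -> R) (q x : list Z) : R := lsum (map G (vsub x q)).

Definition interval_sum (G : Z -> R) (l : nat) : R :=
  lsum (map (fun k => G (Z.of_nat k - Z.of_nat l)%Z) (seq 0 (2 * l + 1))).

Lemma lsum_interval_list (G : Z -> R) (l : nat) (a : Z) :
  lsum (map (fun b => G (b - a)%Z) (interval_list l a)) = interval_sum G l.
Proof. unfold interval_list, interval_sum. rewrite map_map. apply lsum_map_ext. intros. f_equal. lia. Qed.

(* Each coordinate ranges over an interval of length [2l+1] while the others range over a
   cube with [(2l+1)^(n-1)] points; the identity is stated multiplied by [2l+1] to avoid [n-1]. *)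
Lemma lsum_cube_list_coord_sum (G : Z -> R) (l : nat) (q : list Z) :
  INR (2 * l + 1) * lsum (map (coord_sum G q) (cube_list l q)) =
  INR (length q) * INR (2 * l + 1) ^ length q * interval_sum G l.
Proof.
  induction q as [|a q IH]; [unfold coord_sum; simpl; lra|].
  simpl cube_list. rewrite lsum_map_flat_map.
  rewrite (lsum_map_ext _ (fun b => INR (length (cube_list l q)) * G (b - a)%Z
                                   + lsum (map (coord_sum G q) (cube_list l q)))).
  2:{ intros b _. rewrite map_map, (lsum_map_ext _ (fun x => G (b - a)%Z + coord_sum G q x))
        by reflexivity.
      rewrite lsum_map_plus, lsum_map_const. lra. }
  rewrite lsum_map_plus, lsum_map_scal, lsum_map_const, lsum_interval_list.
  rewrite length_interval_list, length_cube_list, pow_INR.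
  set (Y := INR (2 * l + 1)) in *. set (S := lsum (map (coord_sum G q) (cube_list l q))) in *.
  simpl length. rewrite S_INR. simpl pow.
  replace (Y * (Y ^ length q * interval_sum G l + S * Y))
    with (Y * Y ^ length q * interval_sum G l + Y * (Y * S)) by ring.
  rewrite IH. ring.
Qed.

(* The clamp to [l] only matters at the centre [k = 0]; [Rmax 0] makes the profile
   nonnegative whatever [sig] is. *)
Definition profile (sig : nat -> R) (l k : nat) : R := Rmax 0 (sig (Nat.min (l + 1 - k) l)).

Lemma profile_nonneg (sig : nat -> R) (l k : nat) : 0 <= profile sig l k.
Proof. apply Rmax_l. Qed.

Section ProfileSum.

Variables (sig : nat -> R) (l : nat).
Hypothesis Hl : (1 <= l)%nat.
Hypothesis Hsig : forall m, (1 <= m <= l)%nat -> 0 <= sig m.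

Lemma lsum_profile_seq : lsum (map (profile sig l) (seq 1 l)) = lsum (map sig (seq 1 l)).
Proof.
  rewrite lsum_seq_shift, <- lsum_seq_rev. apply lsum_map_ext. intros k Hk. apply in_seq in Hk.
  unfold profile. rewrite Rmax_right by (apply Hsig; lia). f_equal. lia.
Qed.

Lemma interval_sum_profile_le :
  interval_sum (fun z => profile sig l (Z.to_nat (Z.abs z))) l <= 3 * lsum (map sig (seq 1 l)).
Proof.
  set (T := lsum (map sig (seq 1 l))).
  unfold interval_sum. replace (2 * l + 1)%nat with (l + S l)%nat by lia.
  rewrite seq_app, map_app, lsum_app, (lsum_seq_shift _ (0 + l)).
  rewrite (lsum_map_ext _ (fun k => profile sig l (l - k)) (seq 0 l))
    by (intros k Hk; apply in_seq in Hk; f_equal; lia).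
  rewrite (lsum_map_ext _ (profile sig l) (seq 0 (S l))) by (intros; f_equal; lia).
  change (seq 0 (S l)) with (0%nat :: seq 1 l).
  rewrite lsum_seq_rev, map_cons, lsum_cons, lsum_profile_seq. fold T.
  assert (Hcentre : profile sig l 0 <= T).
  { unfold profile. replace (Nat.min (l + 1 - 0) l) with l by lia.
    rewrite Rmax_right by (apply Hsig; lia).
    apply lsum_map_ge_In; [intros m Hm; apply in_seq in Hm; apply Hsig; lia | apply in_seq; lia]. }
  assert (0 <= T) by (apply lsum_map_nonneg; intros m Hm; apply in_seq in Hm; apply Hsig; lia).
  lra.
Qed.

End ProfileSum.

Definition cut_bound (sig : nat -> R) (l : nat) (q : list Z) : R :=
  lsum (map (fun i => profile sig l (Z.to_nat (normInf (vsub i q)))) (cube_list l q)).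

Lemma profile_le_coord_sum (sig : nat -> R) (l : nat) (q i : list Z) :
  length i = length q -> q <> [] ->
  profile sig l (Z.to_nat (normInf (vsub i q)))
  <= coord_sum (fun z => profile sig l (Z.to_nat (Z.abs z))) q i.
Proof.
  intros Hlen Hq.
  destruct (normInf_attained (vsub i q)) as [z [Hz Ez]].
  { intros E. apply Hq, length_zero_iff_nil.
    pose proof (vsub_length i q) as L. rewrite E in L. simpl in L. lia. }
  rewrite <- Ez. unfold coord_sum.
  apply (lsum_map_ge_In (fun z => profile sig l (Z.to_nat (Z.abs z)))); auto.
  intros; apply profile_nonneg.
Qed.

Lemma cut_bound_le (d l : nat) (sig : nat -> R) (q : list Z) :
  (1 <= d)%nat -> site d q -> (1 <= l)%nat ->
  (forall m, (1 <= m <= l)%nat -> 0 <= sig m) ->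
  cut_bound sig l q <= 3 * INR d * (3 * INR l) ^ (d - 1) * lsum (map sig (seq 1 l)).
Proof.
  intros Hd Hq Hl Hsig. unfold site in Hq.
  set (G := fun z => profile sig l (Z.to_nat (Z.abs z))).
  set (T := lsum (map sig (seq 1 l))).
  assert (Hcoord : cut_bound sig l q <= lsum (map (coord_sum G q) (cube_list l q))).
  { apply lsum_map_le. intros i Hi. apply in_cube_list in Hi.
    apply profile_le_coord_sum; [tauto|]. intros ->. simpl in Hq. lia. }
  pose proof (lsum_cube_list_coord_sum G l q) as Hsum. rewrite Hq in Hsum.
  pose proof (interval_sum_profile_le sig l Hl Hsig) as Hint. fold G T in Hint.
  destruct d as [|d']; [lia|]. replace (S d' - 1)%nat with d' by lia.
  set (Y := INR (2 * l + 1)) in *.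
  assert (HY : 0 < Y) by (apply lt_0_INR; lia).
  assert (HYl : Y ^ d' <= (3 * INR l) ^ d').
  { apply pow_incr. unfold Y. rewrite plus_INR, mult_INR.
    assert (1 <= INR l) by (apply (le_INR 1); lia). simpl. lra. }
  assert (Hexact : lsum (map (coord_sum G q) (cube_list l q)) = INR (S d') * Y ^ d' * interval_sum G l).
  { apply (Rmult_eq_reg_l Y); [|lra]. rewrite Hsum. simpl pow. ring. }
  assert (0 <= interval_sum G l) by (apply lsum_map_nonneg; intros; apply profile_nonneg).
  assert (0 <= Y ^ d') by (apply pow_le; lra).
  assert (0 <= INR (S d')) by apply pos_INR.
  assert (INR (S d') * Y ^ d' * interval_sum G l <= INR (S d') * (3 * INR l) ^ d' * (3 * T)).
  { apply Rmult_le_compat; auto. apply Rmult_le_pos; auto. apply Rmult_le_compat_l; auto. }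
  lra.
Qed.

Section GroupByKey.

Variables (X K : Type) (K_eq_dec : forall a b : K, {a = b} + {a <> b}) (key : X -> K).

Definition has_key (a : K) (x : X) : bool := if K_eq_dec (key x) a then true else false.

Lemma lsum_map_indicator (c : R) (a : K) (keys : list K) :
  NoDup keys -> In a keys ->
  lsum (map (fun b => if K_eq_dec a b then c else 0) keys) = c.
Proof.
  induction keys as [|b keys IH]; intros Hn Ha; [destruct Ha|].
  inversion Hn as [|? ? Hb Hn']; subst. rewrite map_cons, lsum_cons.
  destruct (K_eq_dec a b) as [<- | Hab].
  - rewrite (lsum_map_ext _ (fun _ => 0)), lsum_map_const; [lra|].
    intros x Hx. destruct (K_eq_dec a x); [subst; contradiction | reflexivity].
  - destruct Ha as [-> | Ha]; [congruence|]. rewrite IH; auto. lra.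
Qed.

Lemma lsum_group_by_key (f : X -> R) (keys : list K) (L : list X) :
  NoDup keys -> (forall x, In x L -> In (key x) keys) ->
  lsum (map f L) = lsum (map (fun a => lsum (map f (filter (has_key a) L))) keys).
Proof.
  intros Hn. induction L as [|x L IH]; intros HL.
  - simpl. rewrite lsum_map_const. lra.
  - rewrite (lsum_map_ext _ (fun a => (if K_eq_dec (key x) a then f x else 0)
                                      + lsum (map f (filter (has_key a) L)))).
    2:{ intros a _. simpl. unfold has_key at 1. destruct (K_eq_dec (key x) a); simpl; lra. }
    rewrite lsum_map_plus, lsum_map_indicator, <- IH; auto; [|apply HL; left; auto].
    intros y Hy. apply HL. right; auto.
Qed.

Lemma lsum_le_group_by_key (f : X -> R) (bound : K -> R) (keys : list K) (L : list X) :
  NoDup keys -> NoDup L -> (forall x, In x L -> In (key x) keys) ->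
  (forall a M, In a keys -> NoDup M -> (forall x, In x M -> In x L /\ key x = a) ->
     lsum (map f M) <= bound a) ->
  lsum (map f L) <= lsum (map bound keys).
Proof.
  intros Hkeys HL Hin Hbound. rewrite (lsum_group_by_key f keys L) by auto.
  apply lsum_map_le. intros a Ha. apply Hbound; auto; [apply NoDup_filter; auto|].
  intros x Hx. apply filter_In in Hx. destruct Hx as [Hx E]. split; auto.
  unfold has_key in E. destruct (K_eq_dec (key x) a); [auto | discriminate].
Qed.

End GroupByKey.

Lemma NoDup_map_snd_fst_const {A B} (M : list (A * B)) (a : A) :
  NoDup M -> (forall p, In p M -> fst p = a) -> NoDup (map snd M).
Proof.
  induction M as [|p M IH]; intros Hn Hf; simpl; constructor.
  - intros Hin. apply in_map_iff in Hin. destruct Hin as [p' [E Hp']].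
    inversion Hn; subst.
    assert (p' = p) as ->.
    { pose proof (Hf p' (or_intror Hp')). pose proof (Hf p (or_introl eq_refl)).
      destruct p, p'. simpl in *. congruence. }
    contradiction.
  - inversion Hn; subst. apply IH; auto. intros; apply Hf; right; auto.
Qed.

Lemma finsum_unique {T} (P : T -> Prop) (f : T -> R) (a b : R) :
  finsum P f a -> finsum P f b -> a = b.
Proof.
  intros [l1 [N1 [I1 ->]]] [l2 [N2 [I2 ->]]]. apply lsum_perm, Permutation_map.
  apply NoDup_Permutation; auto. intros x. rewrite I1, I2. tauto.
Qed.

Lemma Hval_unique (d : nat) (J : list Z -> list Z -> R) (h : list Z -> R)
    (Gamma : list Z -> Prop) (u : list Z -> R) (a b : R) :
  Hval d J h Gamma u a -> Hval d J h Gamma u b -> a = b.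
Proof.
  intros [A [B [HA [HB ->]]]] [A' [B' [HA' [HB' ->]]]].
  now rewrite (is_lub_u _ _ _ HA HA'), (finsum_unique _ _ _ _ HB HB').
Qed.

Lemma has_nnsum_of_bound {T} (P : T -> Prop) (f : T -> R) (M : R) :
  (forall l, NoDup l -> Forall P l -> lsum (map f l) <= M) ->
  exists L, has_nnsum P f L /\ 0 <= L /\ L <= M.
Proof.
  intros HM.
  destruct (completeness (fun s => exists l, NoDup l /\ Forall P l /\ s = lsum (map f l)))
    as [L HL].
  - exists M. intros s (l & Hn & Hf & ->). auto.
  - exists 0, []. repeat constructor.
  - exists L. split; [exact HL|]. split.
    + apply HL. exists []. repeat constructor.
    + apply HL. intros s (l & Hn & Hf & ->). auto.
Qed.

Lemma sigma_val_nonneg (d : nat) (Lambda : R) (J : list Z -> list Z -> R) (m : nat) (s : R) :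
  J4 d Lambda J -> sigma_val d J m s -> 0 <= s.
Proof.
  intros HJ4 Hs. set (o := repeat 0%Z d).
  assert (Ho : site d o) by apply repeat_length.
  destruct (has_nnsum_of_bound (fun j => site d j /\ (Z.of_nat m <= normInf (vsub j o))%Z)
              (J o) Lambda) as [x [Hx [Hx0 _]]].
  { intros js Hn Hf. apply HJ4; auto. eapply Forall_impl; [|exact Hf]. now intros j [Hj _]. }
  assert (x <= s) by (apply Hs; exists o; auto).
  lra.
Qed.

Definition cubeb (d l : nat) (q i : list Z) : bool :=
  Nat.eqb (length i) d && Z.leb (normInf (vsub i q)) (Z.of_nat l).

Lemma cubeb_spec (d l : nat) (q i : list Z) : cubeb d l q i = true <-> cube d l q i.
Proof. unfold cubeb, cube, site. rewrite andb_true_iff, Nat.eqb_eq, Z.leb_le. tauto. Qed.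

Lemma cubeb_cross (d l : nat) (q x y : list Z) :
  cubeb d l q x && negb (cubeb d l q y) = true -> cube d l q x /\ ~ cube d l q y.
Proof.
  intros E. apply andb_true_iff in E. destruct E as [Ex Ey]. rewrite negb_true_iff in Ey.
  split; [now apply cubeb_spec|]. intros Hc. apply cubeb_spec in Hc. congruence.
Qed.

Definition flip_config (d l : nat) (q : list Z) (s : R) (u : list Z -> R) (i : list Z) : R :=
  if cubeb d l q i then s else u i.

Section CutBonds.

Variables (d : nat) (Lambda : R) (J : list Z -> list Z -> R) (sig : nat -> R) (l : nat) (q : list Z).
Hypothesis HJnn : J_nonneg d J.
Hypothesis HJ1 : J1 d J.
Hypothesis HJ4 : J4 d Lambda J.
Hypothesis Hq : site d q.
Hypothesis Hl : (1 <= l)%nat.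
Hypothesis Hsig : forall m, (1 <= m <= l)%nat -> sigma_val d J m (sig m).

Lemma outside_row_le_profile (i : list Z) (js : list (list Z)) :
  cube d l q i -> NoDup js -> Forall (fun j => site d j /\ ~ cube d l q j) js ->
  lsum (map (J i) js) <= profile sig l (Z.to_nat (normInf (vsub i q))).
Proof.
  intros [Hi Hiq] Hn Hf. pose proof (normInf_nonneg (vsub i q)).
  set (m := Nat.min (l + 1 - Z.to_nat (normInf (vsub i q))) l).
  assert (Hm : (1 <= m <= l)%nat) by lia.
  destruct (has_nnsum_of_bound (fun j => site d j /\ (Z.of_nat m <= normInf (vsub j i))%Z)
              (J i) Lambda) as [x [Hx _]].
  { intros js' Hn' Hf'. apply HJ4; auto. eapply Forall_impl; [|exact Hf']. now intros j [Hj _]. }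
  assert (lsum (map (J i) js) <= x).
  { apply Hx. exists js. repeat split; auto. eapply Forall_impl; [|exact Hf].
    intros j [Hj Hout]. split; auto.
    assert (normInf (vsub j q) > Z.of_nat l)%Z.
    { destruct (Z_le_gt_dec (normInf (vsub j q)) (Z.of_nat l)); auto.
      exfalso. apply Hout. split; auto. }
    unfold site in *. pose proof (normInf_vsub_triangle j i q ltac:(congruence) ltac:(congruence)).
    unfold m. lia. }
  assert (x <= sig m) by (apply (Hsig m Hm); exists i; auto).
  unfold profile. fold m. pose proof (Rmax_r 0 (sig m)). lra.
Qed.

Lemma cut_pairs_le_cut_bound (M : list (list Z * list Z)) :
  NoDup M ->
  Forall (fun p => cube d l q (fst p) /\ site d (snd p) /\ ~ cube d l q (snd p)) M ->
  lsum (map (fun p => J (fst p) (snd p)) M) <= cut_bound sig l q.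
Proof.
  intros Hn Hf. rewrite Forall_forall in Hf.
  apply (lsum_le_group_by_key _ _ (list_eq_dec Z.eq_dec) fst); auto; [apply NoDup_cube_list| |].
  - intros p Hp. apply (in_cube_list_cube d); auto. apply Hf; auto.
  - intros i M' Hi HM' HM.
    rewrite (lsum_map_ext _ (fun p => J i (snd p))) by (intros p Hp; now rewrite (proj2 (HM p Hp))).
    rewrite <- (map_map snd (J i)). apply outside_row_le_profile; auto.
    + now apply (in_cube_list_cube d).
    + apply (NoDup_map_snd_fst_const M' i); auto. intros p Hp; apply HM; auto.
    + rewrite Forall_forall. intros j Hj. apply in_map_iff in Hj. destruct Hj as [p [<- Hp]].
      destruct (HM p Hp) as [Hp' _]. destruct (Hf p Hp') as [_ [A B]]. auto.
Qed.

Lemma flip_pair_term_le (u : list Z -> R) (s : R) (a b : list Z) :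
  config d u -> s = 1 \/ s = -1 -> site d a -> site d b -> cube d l q a \/ cube d l q b ->
  let v := flip_config d l q s u in
  J a b * (1 - v a * v b) <=
    2 * (if cubeb d l q a && negb (cubeb d l q b) then J a b else 0)
  + 2 * (if cubeb d l q b && negb (cubeb d l q a) then J b a else 0).
Proof.
  intros Hu Hs Ha Hb Hab v. unfold v, flip_config.
  assert (0 <= J a b) by (apply HJnn; auto).
  rewrite (HJ1 b a) by auto.
  destruct (cubeb d l q a) eqn:Ea, (cubeb d l q b) eqn:Eb; simpl.
  - destruct Hs as [-> | ->]; lra.
  - destruct Hs as [-> | ->], (Hu b Hb) as [-> | ->]; lra.
  - destruct Hs as [-> | ->], (Hu a Ha) as [-> | ->]; lra.
  - exfalso. destruct Hab as [Hc | Hc]; apply cubeb_spec in Hc; congruence.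
Qed.

Lemma image_cut_pairs_le_cut_bound (Lp : list (list Z * list Z)) (b : list Z * list Z -> bool)
    (g : list Z * list Z -> list Z * list Z) :
  NoDup Lp -> FinFun.Injective g ->
  (forall p, In p Lp -> b p = true ->
     cube d l q (fst (g p)) /\ site d (snd (g p)) /\ ~ cube d l q (snd (g p))) ->
  lsum (map (fun p => J (fst p) (snd p)) (map g (filter b Lp))) <= cut_bound sig l q.
Proof.
  intros Hn Hg Hb. apply cut_pairs_le_cut_bound.
  - apply FinFun.Injective_map_NoDup; [exact Hg | now apply NoDup_filter].
  - rewrite Forall_forall. intros p' Hp'. apply in_map_iff in Hp'. destruct Hp' as [p [<- Hp]].
    apply filter_In in Hp. destruct Hp as [Hp E]. now apply Hb.
Qed.

Lemma flip_interaction_sum_le (u : list Z -> R) (s : R) (Lp : list (list Z * list Z)) :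
  config d u -> s = 1 \/ s = -1 -> NoDup Lp ->
  Forall (fun p => site d (fst p) /\ site d (snd p) /\ (cube d l q (fst p) \/ cube d l q (snd p))) Lp ->
  let v := flip_config d l q s u in
  lsum (map (fun p => J (fst p) (snd p) * (1 - v (fst p) * v (snd p))) Lp) <= 4 * cut_bound sig l q.
Proof.
  intros Hu Hs Hn Hf v. rewrite Forall_forall in Hf.
  set (out_in := fun p : list Z * list Z => cubeb d l q (fst p) && negb (cubeb d l q (snd p))).
  set (in_out := fun p : list Z * list Z => cubeb d l q (snd p) && negb (cubeb d l q (fst p))).
  eapply Rle_trans.
  { apply lsum_map_le. intros p Hp. destruct (Hf p Hp) as (Ha & Hb & Hab).
    exact (flip_pair_term_le u s (fst p) (snd p) Hu Hs Ha Hb Hab). }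
  rewrite lsum_map_plus, !lsum_map_scal.
  rewrite <- (lsum_map_filter (fun p => J (fst p) (snd p)) out_in).
  rewrite <- (lsum_map_filter (fun p => J (snd p) (fst p)) in_out).
  rewrite <- (map_map (fun p => (snd p, fst p)) (fun p => J (fst p) (snd p))).
  assert (Hout_in : lsum (map (fun p => J (fst p) (snd p)) (filter out_in Lp)) <= cut_bound sig l q).
  { rewrite <- (map_id (filter out_in Lp)).
    apply image_cut_pairs_le_cut_bound; auto; [now intros p p'|].
    intros p Hp E. destruct (cubeb_cross _ _ _ _ _ E), (Hf p Hp) as (? & ? & ?). auto. }
  assert (Hin_out : lsum (map (fun p => J (fst p) (snd p))
                            (map (fun p => (snd p, fst p)) (filter in_out Lp))) <= cut_bound sig l q).
  { apply image_cut_pairs_le_cut_bound; auto.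
    - intros [a b] [a' b'] E. simpl in E. congruence.
    - intros p Hp E. destruct (cubeb_cross _ _ _ _ _ E), (Hf p Hp) as (? & ? & ?). simpl. auto. }
  lra.
Qed.

Lemma minimizer_energy_le_cut_bound (h : list Z -> R) (u : list Z -> R) (Lu : R) :
  minimizer d J h (cube d l q) u -> Hval d J h (cube d l q) u Lu ->
  Lu <= 4 * cut_bound sig l q.
Proof.
  intros [Hu [Lu' [HLu' Hmin]]] HLu.
  rewrite (Hval_unique _ _ _ _ _ _ _ HLu HLu').
  set (hs := lsum (map h (cube_list l q))).
  set (s := if Rle_dec hs 0 then 1 else -1).
  assert (Hs : s = 1 \/ s = -1) by (unfold s; destruct Rle_dec; auto).
  assert (Hshs : s * hs <= 0) by (unfold s; destruct Rle_dec; lra).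
  set (v := flip_config d l q s u).
  destruct (has_nnsum_of_bound
              (fun p : list Z * list Z => site d (fst p) /\ site d (snd p)
                                          /\ (cube d l q (fst p) \/ cube d l q (snd p)))
              (fun p => J (fst p) (snd p) * (1 - v (fst p) * v (snd p))) (4 * cut_bound sig l q))
    as [Av [HAv [_ HAvle]]].
  { intros Lp Hn Hf. now apply flip_interaction_sum_le. }
  assert (Hfield : finsum (fun i => site d i /\ cube d l q i) (fun i => h i * v i) (s * hs)).
  { exists (cube_list l q). split; [apply NoDup_cube_list|]. split.
    - intros x. rewrite (in_cube_list_cube d l q x Hq). unfold cube. tauto.
    - unfold hs. rewrite <- lsum_map_scal. apply lsum_map_ext. intros i Hi.
      unfold v, flip_config. replace (cubeb d l q i) with true; [ring|].
      symmetry. apply cubeb_spec, (in_cube_list_cube d l q i Hq), Hi. }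
  assert (Lu' <= Av + s * hs).
  { apply (Hmin v).
    - intros i Hi. unfold v, flip_config. destruct (cubeb d l q i); auto.
    - intros i Hi Hout. unfold v, flip_config. destruct (cubeb d l q i) eqn:E; auto.
      apply cubeb_spec in E. contradiction.
    - exists Av, (s * hs). auto. }
  lra.
Qed.

End CutBonds.

Lemma minimizer_energy_le_rhs (d : nat) (Lambda : R) (J : list Z -> list Z -> R)
    (h : list Z -> R) (sig : nat -> R) (l : nat) (q : list Z) (u : list Z -> R) (Lu : R) :
  (1 <= d)%nat -> J_nonneg d J -> J1 d J -> J4 d Lambda J -> site d q -> (1 <= l)%nat ->
  minimizer d J h (cube d l q) u ->
  (forall m, (1 <= m <= l)%nat -> sigma_val d J m (sig m)) ->
  Hval d J h (cube d l q) u Lu -> Lu <= rhs (12 * INR d * 3 ^ (d - 1)) d l sig.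
Proof.
  intros Hd HJnn HJ1 HJ4 Hq Hl Hmin Hsig HLu.
  pose proof (minimizer_energy_le_cut_bound d Lambda J sig l q HJnn HJ1 HJ4 Hq Hl Hsig h u Lu
                Hmin HLu) as Henergy.
  assert (Hsig0 : forall m, (1 <= m <= l)%nat -> 0 <= sig m)
    by (intros m Hm; exact (sigma_val_nonneg d Lambda J m _ HJ4 (Hsig m Hm))).
  pose proof (cut_bound_le d l sig q Hd Hq Hl Hsig0) as Hcut.
  set (T := lsum (map sig (seq 1 l))) in *.
  assert (0 <= T) by (apply lsum_map_nonneg; intros m Hm; apply in_seq in Hm; apply Hsig0; lia).
  assert (0 <= INR d * 3 ^ (d - 1) * INR l ^ (d - 1))
    by (repeat apply Rmult_le_pos; try apply pow_le; try apply pos_INR; lra).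
  unfold rhs. fold T. rewrite Rpow_mult_distr in Hcut. nra.
Qed.

Theorem mainTheorem8 :
  forall (d : nat), (2 <= d)%nat ->
  (forall (mu : R) (tau : nat), 0 < mu -> (1 <= tau)%nat ->
   exists C : R, 1 <= C /\
   forall (lambda Lambda : R) (J : list Z -> list Z -> R) (h : list Z -> R),
     0 < lambda -> lambda <= Lambda ->
     J_nonneg d J -> J1 d J -> J2 d J -> J3 d lambda J -> J4 d Lambda J ->
     h1 d mu h -> h2 d tau h ->
     forall (q : list Z) (l : nat) (u : list Z -> R) (sig : nat -> R),
       site d q -> (1 <= l)%nat ->
       minimizer d J h (cube d l q) u ->
       (forall m, (1 <= m <= l)%nat -> sigma_val d J m (sig m)) ->
       forall Lu, Hval d J h (cube d l q) u Lu -> Lu <= rhs C d l sig)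
  /\
  (exists C : R, 1 <= C /\
   forall (mu : R) (tau : nat) (lambda Lambda : R)
          (J : list Z -> list Z -> R) (h : list Z -> R),
     0 < mu -> (1 <= tau)%nat ->
     0 < lambda -> lambda <= Lambda ->
     J_nonneg d J -> J1 d J -> J2 d J -> J3 d lambda J -> J4 d Lambda J ->
     h1 d mu h -> h2 d tau h ->
     forall (q : list Z) (l : nat) (u : list Z -> R) (sig : nat -> R),
       site d q -> (1 <= l)%nat ->
       (forall i, cube d l q i -> h i = 0) ->
       minimizer d J h (cube d l q) u ->
       (forall m, (1 <= m <= l)%nat -> sigma_val d J m (sig m)) ->
       forall Lu, Hval d J h (cube d l q) u Lu -> Lu <= rhs C d l sig).
Proof.
  intros d Hd.
  assert (HC : 1 <= 12 * INR d * 3 ^ (d - 1)).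
  { assert (1 <= INR d) by (apply (le_INR 1); lia).
    assert (1 <= 3 ^ (d - 1)) by (apply pow_R1_Rle; lra).
    nra. }
  split.
  - intros mu tau _ _. exists (12 * INR d * 3 ^ (d - 1)). split; [exact HC|].
    intros lambda Lambda J h _ _ HJnn HJ1 _ _ HJ4 _ _ q l u sig Hq Hl Hmin Hsig Lu HLu.
    apply (minimizer_energy_le_rhs d Lambda J h sig l q u); auto; lia.
  - exists (12 * INR d * 3 ^ (d - 1)). split; [exact HC|].
    intros mu tau lambda Lambda J h _ _ _ _ HJnn HJ1 _ _ HJ4 _ _ q l u sig Hq Hl _ Hmin Hsig Lu HLu.
    apply (minimizer_energy_le_rhs d Lambda J h sig l q u); auto; lia.
Qed.
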